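(* For every bipartite state $\rho$ on $\mathcal{H}^A\otimes\mathcal{H}^B$ ($\dim\mathcal{H}^A=m$, $\dim\mathcal{H}^B=n$), $D_P(\rho)\le D_G(\rho)$, where $D_P(\rho)=\min_P\|\mathcal{T}-P\mathcal{T}\|^2$ (minimum over rank-$(m-1)$ orthogonal projections $P$ on $\mathbb{R}^{m^2-1}$, Frobenius norm) and $D_G(\rho)=\min_{\chi}\mathrm{Tr}(\rho-\chi)^2$ with the minimum over all zero-discord states $\chi$.
   Context: Generators $\hat\lambda_i^A$ ($i=1,\dots,m^2-1$) of $SU(m)$ and $\hat\lambda_j^B$ of $SU(n)$ are Hermitian, traceless, with $\mathrm{Tr}(\hat\lambda_i\hat\lambda_j)=2\delta_{ij}$. For a state $\rho$, $x_i=\frac{m}{2}\mathrm{Tr}[(\hat\lambda_i^A\otimes\mathbb{I})\rho]$, $t_{ij}=\frac{mn}{4}\mathrm{Tr}[(\hat\lambda_i^A\otimes\hat\lambda_j^B)\rho]$, $T=(t_{ij})$, and the left-correlation matrix is $\mathcal{T}=\sqrt{\frac{2}{m^2n}}\begin{pmatrix}\vec{x} & \sqrt{\frac{2}{n}}T\end{pmatrix}$. A state $\chi$ is zero-discord (classical-quantum) if $\chi=\sum_{k=1}^m p_k|k\rangle\langle k|\otimes\rho_k^B$ for some orthonormal basis $\{|k\rangle\}$ of $\mathcal{H}^A$, probabilities $p_k$ and states $\rho_k^B$ on $\mathcal{H}^B$. *)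

From HB Require Import structures.
From mathcomp Require Import all_boot all_order all_algebra.
From mathcomp Require Import complex mxtens.
From mathcomp Require Import boolp classical_sets reals.

Set Implicit Arguments.
Unset Strict Implicit.
Unset Printing Implicit Defensive.

Import Order.TTheory GRing.Theory Num.Theory.
Local Open Scope ring_scope.
Local Open Scope classical_set_scope.

Section QDefs.
Variable R : realType.
Local Notation C := (R[i]).

Definition adjmx (p q : nat) (A : 'M[C]_(p, q)) : 'M[C]_(q, p) :=
  (map_mx Num.conj A)^T.

Definition hermitian (p : nat) (A : 'M[C]_p) : Prop := adjmx A = A.

Definition psd (p : nat) (A : 'M[C]_p) : Prop :=
  forall v : 'cV[C]_p, 0 <= (adjmx v *m A *m v) 0 0.

Definition is_state (p : nat) (rho : 'M[C]_p) : Prop :=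
  hermitian rho /\ psd rho /\ \tr rho = 1.

Definition su_generators (p : nat) (lam : 'I_(p ^ 2 - 1) -> 'M[C]_p) : Prop :=
  (forall i, hermitian (lam i)) /\ (forall i, \tr (lam i) = 0) /\
  (forall i j, \tr (lam i *m lam j) = (2 * (i == j)%:R)).

(* zero-discord (classical-quantum) state on H^A (dim m) (x) H^B (dim n):
   chi = sum_k p_k |k><k| (x) rho_k, with {|k>} the columns of a unitary U *)
Definition zero_discord (m n : nat) (chi : 'M[C]_(m * n)) : Prop :=
  exists (U : 'M[C]_m) (p : 'I_m -> R) (rhoB : 'I_m -> 'M[C]_n),
    adjmx U *m U = 1%:M /\
    (forall k, 0 <= p k) /\ \sum_k p k = 1 /\
    (forall k, is_state (rhoB k)) /\
    chi = \sum_k ((p k)%:C%C *: ((col k U *m adjmx (col k U)) *t rhoB k)).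

Definition xvec (m n : nat) (lamA : 'I_(m ^ 2 - 1) -> 'M[C]_m)
  (rho : 'M[C]_(m * n)) : 'cV[R]_(m ^ 2 - 1) :=
  \col_i (m%:R / 2 * complex.Re (\tr ((lamA i *t (1%:M : 'M[C]_n)) *m rho))).

Definition tmat (m n : nat) (lamA : 'I_(m ^ 2 - 1) -> 'M[C]_m)
  (lamB : 'I_(n ^ 2 - 1) -> 'M[C]_n) (rho : 'M[C]_(m * n))
  : 'M[R]_(m ^ 2 - 1, n ^ 2 - 1) :=
  \matrix_(i, j) ((m * n)%:R / 4 *
                  complex.Re (\tr ((lamA i *t lamB j) *m rho))).

Definition left_corr (m n : nat) (lamA : 'I_(m ^ 2 - 1) -> 'M[C]_m)
  (lamB : 'I_(n ^ 2 - 1) -> 'M[C]_n) (rho : 'M[C]_(m * n))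
  : 'M[R]_(m ^ 2 - 1, 1 + (n ^ 2 - 1)) :=
  Num.sqrt (2 / (m ^ 2 * n)%:R) *:
    row_mx (@xvec m n lamA rho) (Num.sqrt (2 / n%:R) *: tmat lamA lamB rho).

Definition frob2 (p q : nat) (A : 'M[R]_(p, q)) : R :=
  \sum_i \sum_j A i j ^+ 2.

Definition orth_proj (p r : nat) (P : 'M[R]_p) : Prop :=
  P^T = P /\ P *m P = P /\ \rank P = r.

Definition D_P (m n : nat) (lamA : 'I_(m ^ 2 - 1) -> 'M[C]_m)
  (lamB : 'I_(n ^ 2 - 1) -> 'M[C]_n) (rho : 'M[C]_(m * n)) : R :=
  inf [set d | exists P : 'M[R]_(m ^ 2 - 1), orth_proj (m - 1) P /\
          d = frob2 (left_corr lamA lamB rho - P *m left_corr lamA lamB rho)].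

Definition D_G (m n : nat) (rho : 'M[C]_(m * n)) : R :=
  inf [set d | exists chi : 'M[C]_(m * n), zero_discord chi /\
          d = complex.Re (\tr ((rho - chi) *m (rho - chi)))].

End QDefs.

From Pilot Require Import Defs.
From HB Require Import structures.
From mathcomp Require Import all_boot all_order all_algebra.
From mathcomp Require Import complex mxtens.
From mathcomp Require Import boolp classical_sets reals.
From mathcomp Require Import ring lra zify.
Set Implicit Arguments.
Unset Strict Implicit.
Unset Printing Implicit Defensive.
Import Order.TTheory GRing.Theory Num.Theory.
Local Open Scope ring_scope.

(** Up to the normalisation built into [left_corr], the entries of the
    left-correlation matrix of a Hermitian [D] are the Hilbert-Schmidt
    coordinates of [D] along the orthonormal family [lam_i (x) 1],
    [lam_i (x) lam_j]; by Bessel, [||T(D)||^2 <= Tr D^2].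
    For a classical-quantum state [chi = sum_k p_k |k><k| (x) rho_k] every
    column of [T(chi)] lies in the span of the vectors [(<k|lam_i|k>)_i],
    [k < m], which sum to [(Tr lam_i)_i = 0] and so span at most [m - 1]
    dimensions: some rank-[(m-1)] orthogonal projection [P] fixes [T(chi)].
    Then [T(rho) - P T(rho) = (1 - P) T(rho - chi)], whose squared norm is
    at most [||T(rho - chi)||^2 <= Tr (rho - chi)^2]. *)

Section Adjoint.
Variable R : realType.
Local Notation C := (R[i]).

Lemma adjmxE p q (A : 'M[C]_(p, q)) i j : adjmx A i j = Num.conj (A j i).
Proof. by rewrite !mxE. Qed.

Lemma adjmxK p q (A : 'M[C]_(p, q)) : adjmx (adjmx A) = A.
Proof. by apply/matrixP=> i j; rewrite !mxE conjCK. Qed.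

Lemma adjmxB p q (A B : 'M[C]_(p, q)) : adjmx (A - B) = adjmx A - adjmx B.
Proof. by apply/matrixP=> i j; rewrite !mxE rmorphB. Qed.

Lemma adjmx_sum p q I (r : seq I) (F : I -> 'M[C]_(p, q)) :
  adjmx (\sum_(k <- r) F k) = \sum_(k <- r) adjmx (F k).
Proof.
apply/matrixP=> i j; rewrite adjmxE !summxE rmorph_sum.
by apply: eq_bigr=> k _; rewrite adjmxE.
Qed.

Lemma adjmxZ_real p q (c : R) (A : 'M[C]_(p, q)) :
  adjmx (c%:C%C *: A) = c%:C%C *: adjmx A.
Proof. by apply/matrixP=> i j; rewrite !mxE rmorphM; congr (_ * _); exact: conjc_real. Qed.

Lemma adjmxM p q r (A : 'M[C]_(p, q)) (B : 'M[C]_(q, r)) :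
  adjmx (A *m B) = adjmx B *m adjmx A.
Proof. by rewrite /adjmx map_mxM trmx_mul. Qed.

Lemma adjmx1 p : adjmx (1%:M : 'M[C]_p) = 1%:M.
Proof. by rewrite /adjmx map_mx1 trmx1. Qed.

Lemma adjmx_tens p q r s (A : 'M[C]_(p, q)) (B : 'M[C]_(r, s)) :
  adjmx (A *t B) = adjmx A *t adjmx B.
Proof. by rewrite /adjmx (map_mxT Num.conj) trmx_tens. Qed.

Lemma mxtrace_adjmx p (A : 'M[C]_p) : \tr (adjmx A) = Num.conj (\tr A).
Proof. by rewrite /mxtrace rmorph_sum; apply: eq_bigr=> i _; rewrite adjmxE. Qed.

Lemma mxtrace_tens p q (A : 'M[C]_p) (B : 'M[C]_q) : \tr (A *t B) = \tr A * \tr B.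
Proof. by rewrite /mxtrace mulr_sum; apply: eq_bigr=> i _; rewrite mxE. Qed.

Lemma Re_conj (z : C) : complex.Re (Num.conj z) = complex.Re z.
Proof. by case: z. Qed.

Lemma Re_realM (c : R) (z : C) : complex.Re (c%:C%C * z) = c * complex.Re z.
Proof. by case: z=> a b /=; rewrite mul0r subr0. Qed.

Lemma Re_mul_selfconj (z w : C) : Num.conj z = z ->
  complex.Re (z * w) = complex.Re z * complex.Re w.
Proof.
case: z=> a b; case: w=> c d /= [h].
have -> : b = 0 by lra.
by rewrite mul0r subr0.
Qed.

End Adjoint.

Section HilbertSchmidt.
Variable R : realType.
Local Notation C := (R[i]).

(* The real part of the Hilbert-Schmidt product is a real inner product on
   complex matrices. *)
Definition hsdot p (A B : 'M[C]_p) : R := complex.Re (\tr (adjmx A *m B)).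

Lemma hsdotC p (A B : 'M[C]_p) : hsdot A B = hsdot B A.
Proof. by rewrite /hsdot -Re_conj -mxtrace_adjmx adjmxM adjmxK. Qed.

Lemma hsdotBr p (A B D : 'M[C]_p) : hsdot A (B - D) = hsdot A B - hsdot A D.
Proof. by rewrite /hsdot mulmxBr linearB /= raddfB. Qed.

Lemma hsdotZr p (A B : 'M[C]_p) c : hsdot A (c%:C%C *: B) = c * hsdot A B.
Proof. by rewrite /hsdot -scalemxAr mxtraceZ Re_realM. Qed.

Lemma hsdotZl p (A B : 'M[C]_p) c : hsdot (c%:C%C *: A) B = c * hsdot A B.
Proof. by rewrite hsdotC hsdotZr hsdotC. Qed.

Lemma hsdot_sumr p I (r : seq I) (A : 'M[C]_p) (F : I -> 'M[C]_p) :
  hsdot A (\sum_(k <- r) F k) = \sum_(k <- r) hsdot A (F k).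
Proof.
elim/big_rec2: _ => [|k x y _ <-]; last by rewrite /hsdot mulmxDr mxtraceD raddfD.
by rewrite /hsdot mulmx0 mxtrace0.
Qed.

Lemma hsdot_ge0 p (A : 'M[C]_p) : 0 <= hsdot A A.
Proof.
rewrite /hsdot /mxtrace raddf_sum /=; apply: sumr_ge0=> i _.
rewrite mxE raddf_sum /=; apply: sumr_ge0=> j _.
rewrite adjmxE mulrC.
by have := mul_conjC_ge0 (A j i); rewrite lecE => /andP[].
Qed.

Lemma hsdot_hermitian p (A B : 'M[C]_p) : Defs.hermitian A ->
  hsdot A B = complex.Re (\tr (A *m B)).
Proof. by move=> hA; rewrite /hsdot hA. Qed.

Lemma hsdot_tens m n (A1 A2 : 'M[C]_m) (B1 B2 : 'M[C]_n) :
  Defs.hermitian A1 -> Defs.hermitian B1 ->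
  hsdot (A1 *t B1) (A2 *t B2) = complex.Re (\tr (A1 *m A2) * \tr (B1 *m B2)).
Proof.
by move=> hA hB; rewrite /hsdot adjmx_tens hA hB tensmx_mul mxtrace_tens.
Qed.

Lemma bessel p (I : finType) (f : I -> 'M[C]_p) (D : 'M[C]_p) :
  (forall a b, hsdot (f a) (f b) = (a == b)%:R) ->
  \sum_a hsdot (f a) D ^+ 2 <= hsdot D D.
Proof.
move=> ortho; pose S := \sum_a (hsdot (f a) D)%:C%C *: f a.
have hsdotS X : hsdot S X = \sum_a hsdot (f a) D * hsdot (f a) X.
  by rewrite hsdotC hsdot_sumr; apply: eq_bigr=> a _; rewrite hsdotZr [hsdot X _]hsdotC.
have SD : hsdot S D = \sum_a hsdot (f a) D ^+ 2.
  by rewrite hsdotS; apply: eq_bigr=> a _; rewrite expr2.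
have SS : hsdot S S = \sum_a hsdot (f a) D ^+ 2.
  rewrite hsdotS; apply: eq_bigr=> a _; rewrite hsdot_sumr (bigD1 a) //=.
  rewrite big1 ?addr0 => [|b nba]; rewrite hsdotZr ortho ?eqxx ?mulr1 ?expr2 //.
  by rewrite eq_sym (negbTE nba) mulr0.
have := hsdot_ge0 (D - S).
rewrite hsdotBr [hsdot (D - S) D]hsdotC [hsdot (D - S) S]hsdotC !hsdotBr.
by rewrite [hsdot D S]hsdotC SD SS subrr subr0 subr_ge0.
Qed.

End HilbertSchmidt.

Section OrthogonalProjection.

Lemma mul_tr_row_eq0 (R : realDomainType) N (w : 'rV[R]_N) :
  w *m w^T = 0 -> w = 0.
Proof.
move=> /(congr1 (fun M : 'M[R]_1 => M 0 0)); rewrite !mxE => /eqP.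
rewrite psumr_eq0 => [/allP w0|j _]; last by rewrite mxE -expr2 sqr_ge0.
apply/matrixP=> i j; rewrite (ord1 i) mxE.
by have := w0 j (mem_index_enum j); rewrite mxE -expr2 sqrf_eq0 => /eqP.
Qed.

Lemma row_free_mul_tr_unit (R : realFieldType) r N (A : 'M[R]_(r, N)) :
  row_free A -> A *m A^T \in unitmx.
Proof.
move=> fA; rewrite -row_free_unit; apply: inj_row_free=> v vAA0.
have : (v *m A) *m (v *m A)^T = 0.
  by rewrite trmx_mul mulmxA -(mulmxA v) vAA0 mul0mx.
by move=> /mul_tr_row_eq0/eqP; rewrite mulmx_free_eq0 // => /eqP.
Qed.

Lemma submx_extend_rank (F : fieldType) m N (V : 'M[F]_(m, N)) k :
  (\rank V + k <= N)%N ->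
  exists W : 'M[F]_N, (V <= W)%MS /\ \rank W = (\rank V + k)%N.
Proof.
elim: k=> [|k IH] hk; first by exists <<V>>%MS; split; rewrite genmxE ?addn0.
have [|W [VW rW]] := IH; first by rewrite addnS in hk; exact: ltnW.
have /row_subPn [i Wi] : ~~ (1%:M <= W)%MS.
  apply/negP=> /mxrankS; rewrite mxrank1 rW.
  by move: hk; rewrite addnS => /leq_trans h /h; rewrite ltnn.
exists (W + row i 1%:M)%MS; split; first exact: submx_trans VW (addsmxSl _ _).
apply/eqP; rewrite eqn_leq; apply/andP; split.
  apply: leq_trans (mxrank_adds_leqif _ _) _.
  by rewrite rW addnS -[X in (_ <= X)%N]addn1 leq_add2l rank_leq_row.
rewrite addnS -rW; have /leqifP := mxrank_leqif_sup (addsmxSl W (row i 1%:M)).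
by case: ifP=> // /(submx_trans (addsmxSr _ _)); rewrite (negbTE Wi).
Qed.

(* The projection onto the row space of [A] is [A^T (A A^T)^-1 A], where [A]
   is a basis of a rank-[d] space containing the rows of [V]. *)
Lemma orth_proj_supset (R : realFieldType) m N d (V : 'M[R]_(m, N)) :
  (\rank V <= d <= N)%N ->
  exists P : 'M[R]_N, [/\ P^T = P, P *m P = P, \rank P = d & V *m P = V].
Proof.
move=> /andP[Vd dN].
have [|W [VW rW]] := @submx_extend_rank _ m N V (d - \rank V).
  by rewrite subnKC.
rewrite subnKC // in rW.
pose A := row_base W.
have fA : row_free A := row_base_free W.
have rA : \rank A = d by rewrite eq_row_base.
have VA : (V <= A)%MS by rewrite eq_row_base.
clearbody A.
pose P := A^T *m invmx (A *m A^T) *m A.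
have AP : A *m P = A.
  by rewrite /P !mulmxA mulmxV ?mul1mx ?row_free_mul_tr_unit.
exists P; split.
- by rewrite /P !trmx_mul trmxK trmx_inv trmx_mul trmxK mulmxA.
- by rewrite {1}/P -!mulmxA AP /P mulmxA.
- apply/eqP; rewrite eqn_leq -{1}rA mxrankM_maxr /=.
  by rewrite -{1}rA -{1}AP mxrankM_maxr.
- by have /submxP [X ->] := VA; rewrite -mulmxA AP.
Qed.

End OrthogonalProjection.

Section Frobenius.
Variable R : realType.

Lemma frob2_ge0 p q (A : 'M[R]_(p, q)) : 0 <= frob2 A.
Proof. by apply: sumr_ge0=> i _; apply: sumr_ge0=> j _; apply: sqr_ge0. Qed.

Lemma frob2_trace p q (A : 'M[R]_(p, q)) : frob2 A = \tr (A *m A^T).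
Proof.
apply: eq_bigr=> i _; rewrite mxE; apply: eq_bigr=> j _.
by rewrite !mxE expr2.
Qed.

Lemma frob2Z p q (a : R) (A : 'M[R]_(p, q)) : frob2 (a *: A) = a ^+ 2 * frob2 A.
Proof.
rewrite /frob2 mulr_sumr; apply: eq_bigr=> i _; rewrite mulr_sumr.
by apply: eq_bigr=> j _; rewrite mxE exprMn.
Qed.

Lemma frob2_row_mx p q1 q2 (A : 'M[R]_(p, q1)) (B : 'M[R]_(p, q2)) :
  frob2 (row_mx A B) = frob2 A + frob2 B.
Proof.
rewrite /frob2 -big_split /=; apply: eq_bigr=> i _.
rewrite big_split_ord /=; congr (_ + _); apply: eq_bigr=> j _.
  by rewrite row_mxEl.
by rewrite row_mxEr.
Qed.

Lemma frob2_proj N q (P : 'M[R]_N) (X : 'M[R]_(N, q)) :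
  P^T = P -> P *m P = P -> frob2 (P *m X) = \tr (P *m (X *m X^T)).
Proof.
move=> P_sym P_idem.
rewrite frob2_trace trmx_mul P_sym !mulmxA mxtrace_mulC !mulmxA P_idem.
by rewrite -mulmxA.
Qed.

Lemma frob2_compl_proj_le N q (P : 'M[R]_N) (X : 'M[R]_(N, q)) :
  P^T = P -> P *m P = P -> frob2 ((1%:M - P) *m X) <= frob2 X.
Proof.
move=> P_sym P_idem.
have Q_sym : (1%:M - P)^T = 1%:M - P by rewrite linearB /= trmx1 P_sym.
have Q_idem : (1%:M - P) *m (1%:M - P) = 1%:M - P.
  by rewrite mulmxBl mul1mx mulmxBr mulmx1 P_idem subrr subr0.
rewrite frob2_proj // mulmxBl mul1mx linearB /= -frob2_proj //.
by rewrite [frob2 X]frob2_trace lerBlDr lerDl frob2_ge0.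
Qed.

End Frobenius.

Section CorrelationBasis.
Variable R : realType.
Local Notation C := (R[i]).
Variables (m n : nat) (lamA : 'I_(m ^ 2 - 1) -> 'M[C]_m)
  (lamB : 'I_(n ^ 2 - 1) -> 'M[C]_n).

Lemma left_corrB (A B : 'M[C]_(m * n)) :
  left_corr lamA lamB (A - B) = left_corr lamA lamB A - left_corr lamA lamB B.
Proof.
rewrite /left_corr -scalerBr opp_row_mx add_row_mx -scalerBr.
congr (_ *: row_mx _ (_ *: _)); apply/matrixP=> i j;
  by rewrite !mxE mulmxBr linearB /= raddfB /= mulrBr.
Qed.

Hypotheses (m_gt0 : (0 < m)%N) (n_gt0 : (0 < n)%N).
Hypotheses (genA : su_generators lamA) (genB : su_generators lamB).

Local Notation corr_index :=
  ('I_(m ^ 2 - 1) + 'I_(m ^ 2 - 1) * 'I_(n ^ 2 - 1))%type.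

Let cA := Num.sqrt (2 / (m ^ 2 * n)%N%:R : R).
Let cT := Num.sqrt (2 / n%:R : R).
Let sx := cA * (m%:R / 2).
Let sT := cA * cT * ((m * n)%:R / 4).

Definition corr_basis (x : corr_index) : 'M[C]_(m * n) :=
  match x with
  | inl i => sx%:C%C *: (lamA i *t 1%:M)
  | inr ij => sT%:C%C *: (lamA ij.1 *t lamB ij.2)
  end.

Lemma frob2_left_corr (D : 'M[C]_(m * n)) :
  frob2 (left_corr lamA lamB D) = \sum_x hsdot (corr_basis x) D ^+ 2.
Proof.
have [hA _] := genA; have [hB _] := genB.
rewrite big_sumType /= -(pair_big xpredT xpredT
  (fun i j => hsdot (corr_basis (inr (i, j))) D ^+ 2)) /=.
rewrite /left_corr frob2Z frob2_row_mx frob2Z -/cA -/cT mulrDr.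
congr (_ + _).
  rewrite mulr_sumr; apply: eq_bigr=> i _; rewrite big_ord1 !mxE hsdotZl.
  rewrite hsdot_hermitian; first by rewrite /sx; ring.
  by rewrite /Defs.hermitian adjmx_tens hA adjmx1.
rewrite mulrA mulr_sumr; apply: eq_bigr=> i _; rewrite mulr_sumr.
apply: eq_bigr=> j _; rewrite !mxE hsdotZl hsdot_hermitian.
  by rewrite /sT /=; ring.
by rewrite /Defs.hermitian adjmx_tens hA hB.
Qed.

(* The factors in [left_corr] are exactly those normalising [lam_i (x) 1]
   (of squared norm [2 n]) and [lam_i (x) lam_j] (of squared norm [4]). *)
Lemma corr_basis_orthonormal x y :
  hsdot (corr_basis x) (corr_basis y) = (x == y)%:R.
Proof.
have [hA [_ oA]] := genA; have [hB [tB oB]] := genB.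
have h1 : Defs.hermitian (1%:M : 'M[C]_n) := adjmx1 R n.
have mR : (m%:R : R) != 0 by rewrite pnatr_eq0 -lt0n.
have nR : (n%:R : R) != 0 by rewrite pnatr_eq0 -lt0n.
have cA2 : cA ^+ 2 = 2 / (m%:R ^+ 2 * n%:R).
  by rewrite sqr_sqrtr ?divr_ge0 ?ler0n // natrM natrX.
have cT2 : cT ^+ 2 = 2 / n%:R by rewrite sqr_sqrtr ?divr_ge0 ?ler0n.
have sx2 : sx * sx = (2 * n%:R)^-1.
  rewrite (_ : sx * sx = cA ^+ 2 * (m%:R / 2) ^+ 2); last by rewrite /sx; ring.
  by rewrite cA2; field; rewrite mR nR.
have sT2 : sT * sT = 4^-1.
  rewrite (_ : sT * sT = cA ^+ 2 * cT ^+ 2 * ((m * n)%:R / 4) ^+ 2).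
    by rewrite cA2 cT2 natrM; field; rewrite mR nR.
  by rewrite /sT; ring.
case: x y => [i|[i j]] [k|[k l]] /=;
  rewrite hsdotZl hsdotZr hsdot_tens ?hA ?hB ?h1 //.
- rewrite mulrA sx2 oA mul1mx mxtrace1 -!natrM raddfMn /= (inj_eq inl_inj).
  case: (i == k) => /=; last by rewrite muln0 mul0n mulr0.
  by rewrite muln1 mulVf // natrM mulf_neq0 // pnatr_eq0.
- by rewrite mul1mx tB !mulr0.
- by rewrite mulmx1 tB !mulr0.
- rewrite mulrA sT2 oA oB -!natrM raddfMn /= (inj_eq inr_inj) xpair_eqE.
  case: (i == k); case: (j == l) => /=; rewrite ?muln0 ?mul0n ?mulr0 //.
  by rewrite mulVf // pnatr_eq0.
Qed.

Lemma frob2_left_corr_le (D : 'M[C]_(m * n)) : Defs.hermitian D ->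
  frob2 (left_corr lamA lamB D) <= complex.Re (\tr (D *m D)).
Proof.
move=> hD; rewrite frob2_left_corr -hsdot_hermitian //.
exact: bessel corr_basis_orthonormal.
Qed.

End CorrelationBasis.

Section ClassicalQuantum.
Variable R : realType.
Local Notation C := (R[i]).

Definition cq_mx m n (U : 'M[C]_m) (p : 'I_m -> R) (rhoB : 'I_m -> 'M[C]_n)
    : 'M[C]_(m * n) :=
  \sum_k (p k)%:C%C *: ((col k U *m adjmx (col k U)) *t rhoB k).

Definition expval m (U lam : 'M[C]_m) (k : 'I_m) : C :=
  (adjmx (col k U) *m lam *m col k U) 0 0.

Lemma expval_selfconj m (U lam : 'M[C]_m) k : Defs.hermitian lam ->
  Num.conj (expval U lam k) = expval U lam k.
Proof.
move=> lam_herm; rewrite /expval -adjmxE.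
by rewrite !adjmxM adjmxK lam_herm mulmxA.
Qed.

Lemma sum_expval m (U lam : 'M[C]_m) : adjmx U *m U = 1%:M ->
  \sum_k expval U lam k = \tr lam.
Proof.
move=> /mulmx1C U_unitary.
rewrite -[in RHS](mulmx1 lam) -U_unitary mulmxA mxtrace_mulC mulmxA.
rewrite /mxtrace; apply: eq_bigr=> k _; rewrite /expval !mxE.
apply: eq_bigr=> j _; rewrite !mxE; congr (_ * _).
by apply: eq_bigr=> l _; rewrite !mxE.
Qed.

Lemma cq_mx_hermitian m n (U : 'M[C]_m) p (rhoB : 'I_m -> 'M[C]_n) :
  (forall k, Defs.hermitian (rhoB k)) -> Defs.hermitian (cq_mx U p rhoB).
Proof.
move=> rhoB_herm; rewrite /Defs.hermitian adjmx_sum; apply: eq_bigr=> k _.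
by rewrite adjmxZ_real adjmx_tens adjmxM adjmxK rhoB_herm.
Qed.

Lemma Re_tr_tens_cq_mx m n (U : 'M[C]_m) p (rhoB : 'I_m -> 'M[C]_n)
    (lam : 'M[C]_m) (Y : 'M[C]_n) : Defs.hermitian lam ->
  complex.Re (\tr ((lam *t Y) *m cq_mx U p rhoB)) =
  \sum_k p k * (complex.Re (expval U lam k) * complex.Re (\tr (Y *m rhoB k))).
Proof.
move=> lam_herm; rewrite mulmx_sumr [\tr _]raddf_sum raddf_sum; apply: eq_bigr=> k _.
rewrite /= -scalemxAr tensmx_mul mxtraceZ Re_realM mxtrace_tens; congr (_ * _).
rewrite mulmxA mxtrace_mulC mulmxA trace_mx11 -/(expval U lam k).
by rewrite Re_mul_selfconj // expval_selfconj.
Qed.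

Definition expval_mx m (U : 'M[C]_m) (lamA : 'I_(m ^ 2 - 1) -> 'M[C]_m)
    : 'M[R]_(m, m ^ 2 - 1) :=
  \matrix_(k, i) complex.Re (expval U (lamA i) k).

Lemma rank_expval_mx m (U : 'M[C]_m) (lamA : 'I_(m ^ 2 - 1) -> 'M[C]_m) :
  (0 < m)%N -> (forall i, \tr (lamA i) = 0) -> adjmx U *m U = 1%:M ->
  (\rank (expval_mx U lamA) <= m - 1)%N.
Proof.
move=> m_gt0 lamA_tr U_unitary.
have rows_sum0 : const_mx 1 *m expval_mx U lamA = 0 :> 'rV_(m ^ 2 - 1).
  apply/matrixP=> z i; rewrite !mxE.
  under eq_bigr do rewrite !mxE mul1r.
  by rewrite -raddf_sum sum_expval // lamA_tr.
suff : \rank (expval_mx U lamA) != m by have := rank_leq_row (expval_mx U lamA); lia.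
apply/negP=> /eqP full; move/eqP: rows_sum0.
rewrite mulmx_free_eq0 /row_free ?full // => /eqP/matrixP/(_ 0 (Ordinal m_gt0)).
by rewrite !mxE => /eqP; rewrite oner_eq0.
Qed.

Lemma left_corr_cq_mx_factor m n (lamA : 'I_(m ^ 2 - 1) -> 'M[C]_m)
    (lamB : 'I_(n ^ 2 - 1) -> 'M[C]_n) (U : 'M[C]_m) p (rhoB : 'I_m -> 'M[C]_n) :
  (forall i, Defs.hermitian (lamA i)) -> (forall k, \tr (rhoB k) = 1) ->
  exists W : 'M[R]_(m, 1 + (n ^ 2 - 1)),
    left_corr lamA lamB (cq_mx U p rhoB) = (expval_mx U lamA)^T *m W.
Proof.
move=> lamA_herm rhoB_tr.
exists (Num.sqrt (2 / (m ^ 2 * n)%N%:R) *: row_mx (\col_k (m%:R / 2 * p k))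
   (Num.sqrt (2 / n%:R) *: \matrix_(k, j) ((m * n)%N%:R / 4 *
       (p k * complex.Re (\tr (lamB j *m rhoB k)))))).
rewrite -scalemxAr mul_mx_row -scalemxAr /left_corr.
congr (_ *: row_mx _ (_ *: _)); apply/matrixP=> i j; rewrite !mxE;
  rewrite Re_tr_tens_cq_mx // mulr_sumr; apply: eq_bigr=> k _;
  rewrite ?mul1mx ?rhoB_tr !mxE /=; ring.
Qed.

Lemma proj_fixes_left_corr_cq_mx m n (lamA : 'I_(m ^ 2 - 1) -> 'M[C]_m)
    (lamB : 'I_(n ^ 2 - 1) -> 'M[C]_n) (U : 'M[C]_m) p (rhoB : 'I_m -> 'M[C]_n) :
  (0 < m)%N -> su_generators lamA -> adjmx U *m U = 1%:M ->
  (forall k, \tr (rhoB k) = 1) ->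
  exists P : 'M[R]_(m ^ 2 - 1), orth_proj (m - 1) P /\
    P *m left_corr lamA lamB (cq_mx U p rhoB) = left_corr lamA lamB (cq_mx U p rhoB).
Proof.
move=> m_gt0 [lamA_herm [lamA_tr _]] U_unitary rhoB_tr.
have [W ->] := left_corr_cq_mx_factor lamB U p lamA_herm rhoB_tr.
have rank_le : (\rank (expval_mx U lamA) <= m - 1 <= m ^ 2 - 1)%N.
  rewrite rank_expval_mx //= leq_sub2r // -{1}[m]expn1 leq_pexp2l //.
have [P [P_sym P_idem P_rank VP]] := orth_proj_supset rank_le.
by exists P; split; rewrite // mulmxA -{1}P_sym -trmx_mul VP.
Qed.

Lemma psd_mul_adjmx p (w : 'cV[C]_p) : psd (w *m adjmx w).
Proof.
move=> v; rewrite mulmxA -(mulmxA (adjmx v *m w)).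
have -> : adjmx w *m v = adjmx (adjmx v *m w) by rewrite adjmxM adjmxK.
by rewrite !mxE big_ord1 !mxE mul_conjC_ge0.
Qed.

Lemma zero_discord_exists m n : (0 < m)%N -> (0 < n)%N ->
  exists chi : 'M[C]_(m * n), zero_discord chi.
Proof.
case: m n => [|m] [|n] // _ _.
pose e : 'cV[C]_n.+1 := delta_mx 0 0.
eexists; exists 1%:M, (fun k => (k == ord0)%:R), (fun=> e *m adjmx e).
split; first by rewrite adjmx1 mulmx1.
split; first by move=> k; rewrite ler0n.
split; first by rewrite (bigD1 ord0) //= big1 ?addr0 // => k /negbTE ->.
split=> [_|//]; split; first by rewrite /Defs.hermitian adjmxM adjmxK.
split; first exact: psd_mul_adjmx.
rewrite mxtrace_mulC trace_mx11 !mxE (bigD1 ord0) //= big1 => [|j /negbTE j0].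
  by rewrite !mxE eqxx /= rmorph1 mulr1 addr0.
by rewrite !mxE j0 mulr0.
Qed.

Lemma state_dim_gt0 p (rho : 'M[C]_p) : \tr rho = 1 -> (0 < p)%N.
Proof. by case: p rho => // rho; rewrite /mxtrace big_ord0 => /esym/eqP; rewrite oner_eq0. Qed.

Lemma D_P_le_proj m n (lamA : 'I_(m ^ 2 - 1) -> 'M[C]_m)
    (lamB : 'I_(n ^ 2 - 1) -> 'M[C]_n) (rho : 'M[C]_(m * n)) P :
  orth_proj (m - 1) P ->
  D_P lamA lamB rho <= frob2 (left_corr lamA lamB rho - P *m left_corr lamA lamB rho).
Proof.
move=> P_proj; apply: ge_inf; last by exists P.
by exists 0 => _ [Q [_ ->]]; apply: frob2_ge0.
Qed.

End ClassicalQuantum.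

Theorem mainTheorem2 (R : realType) (m n : nat)
  (lamA : 'I_(m ^ 2 - 1) -> 'M[R[i]]_m) (lamB : 'I_(n ^ 2 - 1) -> 'M[R[i]]_n)
  (rho : 'M[R[i]]_(m * n)) :
  su_generators lamA -> su_generators lamB -> is_state rho ->
  D_P lamA lamB rho <= @D_G R m n rho.
Proof.
move=> genA genB [rho_herm [_ rho_tr]].
have /andP[m_gt0 n_gt0] : (0 < m)%N && (0 < n)%N.
  by rewrite -muln_gt0 (state_dim_gt0 rho_tr).
apply: lb_le_inf.
  have [chi chi_cq] := zero_discord_exists R m_gt0 n_gt0.
  by exists (complex.Re (\tr ((rho - chi) *m (rho - chi)))), chi.
move=> _ [_ [[U [p [rhoB [U_unitary [_ [_ [rhoB_state ->]]]]]]] ->]].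
rewrite -/(cq_mx U p rhoB); set chi := cq_mx U p rhoB.
have [P [P_proj P_fix]] := proj_fixes_left_corr_cq_mx lamB p m_gt0 genA
  U_unitary (fun k => (rhoB_state k).2.2).
have [P_sym [P_idem _]] := P_proj.
apply: le_trans (D_P_le_proj lamA lamB rho P_proj) _.
have -> : left_corr lamA lamB rho - P *m left_corr lamA lamB rho =
    (1%:M - P) *m left_corr lamA lamB (rho - chi).
  by rewrite left_corrB mulmxBl mul1mx mulmxBr P_fix opprB addrA subrK.
apply: le_trans (frob2_compl_proj_le _ P_sym P_idem) _.
apply: frob2_left_corr_le => //; rewrite /Defs.hermitian adjmxB rho_herm.
by rewrite cq_mx_hermitian // => k; case: (rhoB_state k).
Qed.
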